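(* Let $R$ be a countable, cotorsion-free commutative ring. If $A$ and $B$ are torsion-free countable $R$-modules and $H=\mathrm{Hom}_R(A,B)$ is uncountable, then $H$ contains a submodule isomorphic to $R^\omega$ (the product of $\omega$ copies of $R$).
   Context: An $R$-module $B$ is torsion-free if $bs=0$ with $b\in B$ and $0\ne s\in R$ implies $b=0$. Cotorsion-free is with respect to a countable multiplicative subset $\mathbb{S}\subseteq R$ ($0\notin\mathbb{S}$, $1\in\mathbb{S}$): $R$ is $\mathbb{S}$-reduced ($\bigcap_{s\in\mathbb{S}}sR=0$), $\mathbb{S}$-torsion-free, and $\mathrm{Hom}_R(\widehat R,R)=0$ for the $\mathbb{S}$-adic completion $\widehat R$. *)

From HB Require Import structures.
From mathcomp Require Import all_boot all_order all_algebra.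
Set Implicit Arguments. Unset Strict Implicit. Unset Printing Implicit Defensive.
Import GRing.Theory.
Local Open Scope ring_scope.

Definition countable_type (T : Type) : Prop := exists f : nat -> T, forall t, exists n, f n = t.

Definition torsion_free (R : comNzRingType) (M : lmodType R) : Prop :=
  forall (s : R) (b : M), s != 0 -> s *: b = 0 -> b = 0.

Definition mult_subset (R : comNzRingType) (S : pred R) : Prop :=
  [/\ 1 \in S, 0 \notin S & forall s t, s \in S -> t \in S -> s * t \in S].

Definition in_ideal (R : comNzRingType) (s y : R) : Prop := exists v, y = s * v.

(* The S-adic completion R^ = lim_{s in S} R/sR (inverse limit over S ordered by
   divisibility).  An element is represented by a family x : R -> R of
   representatives x s of the class in R/sR (only values on S matter), compatible
   with the transition maps: if s | t then x t = x s mod sR. *)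
Definition completion_elt (R : comNzRingType) (S : pred R) (x : R -> R) : Prop :=
  forall s t, s \in S -> t \in S -> in_ideal s t -> in_ideal s (x t - x s).

Definition completion_eq (R : comNzRingType) (S : pred R) (x y : R -> R) : Prop :=
  forall s, s \in S -> in_ideal s (x s - y s).

Definition completion_hom (R : comNzRingType) (S : pred R) (phi : (R -> R) -> R) : Prop :=
  [/\ forall x y, completion_elt S x -> completion_elt S y ->
        completion_eq S x y -> phi x = phi y,
      forall x y, completion_elt S x -> completion_elt S y ->
        phi (fun s => x s + y s) = phi x + phi y
    & forall (r : R) x, completion_elt S x -> phi (fun s => r * x s) = r * phi x].

Definition hom_completion_zero (R : comNzRingType) (S : pred R) : Prop :=
  forall phi, completion_hom S phi -> forall x, completion_elt S x -> phi x = 0.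

Definition cotorsion_free (R : comNzRingType) (S : pred R) : Prop :=
  [/\ (forall r : R, (forall s, s \in S -> in_ideal s r) -> r = 0),
      (forall (r s : R), s \in S -> r * s = 0 -> r = 0)
    & hom_completion_zero S].

(* Enumerate A as a_0, a_1, ...  Since Hom(A, B) is uncountable while B^k is
   countable, restriction to {a_0, ..., a_(k-1)} is not injective, so for every
   k some homomorphism h_k vanishes on a_0, ..., a_(k-1) but not on some a_(m_k).
   Passing to a subsequence gives homomorphisms g_n and elements e_n with
   g_n e_n <> 0 and g_n e_i = 0 for i < n, and with g_n a = 0 for n large
   enough with respect to a.  Then x |-> sum_n x_n g_n is a well defined
   homomorphism R^omega -> Hom(A, B), injective by triangularity and since B is
   torsion-free. *)
From HB Require Import structures.
From mathcomp Require Import all_boot all_order all_algebra.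
From Stdlib Require Import Classical ClassicalEpsilon ProofIrrelevance FunctionalExtensionality.
Import GRing.Theory.
Local Open Scope ring_scope.

Set Implicit Arguments.
Unset Strict Implicit.

Lemma big_ord_vanishing_tail (V : nmodType) (F : nat -> V) (M N : nat) :
  (M <= N)%N -> (forall n, (M <= n)%N -> F n = 0) ->
  \sum_(n < N) F n = \sum_(n < M) F n.
Proof.
move=> le_MN F0; rewrite (big_ord_widen N F le_MN) [RHS]big_mkcond.
by apply: eq_bigr => i _; case: ltnP => // /F0.
Qed.

Lemma countable_seq (T : Type) : countable_type T -> countable_type (seq T).
Proof.
move=> [f f_surj].
have map_surj s : exists ns, map f ns = s.
  elim: s => [|t s [ns <-]]; first by exists [::].
  by have [n <-] := f_surj t; exists (n :: ns).
exists (fun n => map f (CodeSeq.decode n)) => s.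
by have [ns <-] := map_surj s; exists (CodeSeq.code ns); rewrite CodeSeq.codeK.
Qed.

Lemma countable_inj (T U : Type) (t0 : T) (F : T -> U) :
  injective F -> countable_type U -> countable_type T.
Proof.
move=> F_inj [f f_surj].
exists (fun n => epsilon (inhabits t0) (fun t => F t = f n)) => t.
have [n fnE] := f_surj (F t); exists n; apply: F_inj.
by rewrite (epsilon_spec (inhabits t0) (fun t => F t = f n)) //; exists t.
Qed.

Section LinearMaps.
Variables (R : comNzRingType) (A B : lmodType R).

Definition linear_of (f : A -> B) (f_lin : linear f) : {linear A -> B} :=
  HB.pack f (GRing.isLinear.Build R A B *:%R f f_lin).

Lemma linear_eq (h1 h2 : {linear A -> B}) : h1 =1 h2 -> h1 = h2.
Proof.
move: h1 h2 => [f1 [[add1] [scale1]]] [f2 [[add2] [scale2]]] /=.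
move=> /functional_extensionality E; subst f2.
by rewrite (proof_irrelevance _ add1 add2) (proof_irrelevance _ scale1 scale2).
Qed.

Lemma uncountable_hom_separates (fA : nat -> A) :
  (forall a, exists n, fA n = a) -> countable_type B ->
  ~ countable_type {linear A -> B} ->
  forall k, exists h : {linear A -> B}, exists m,
    (forall j, (j < k)%N -> h (fA j) = 0) /\ h (fA m) != 0.
Proof.
move=> fA_surj B_cnt H_unc k; apply: NNPP => none; apply: H_unc.
pose restrict (h : {linear A -> B}) := [seq h (fA j) | j <- iota 0 k].
apply: (@countable_inj {linear A -> B} _ \0 restrict); last exact: countable_seq.
move=> h1 h2 /eq_in_map E; apply: linear_eq => a.
have [n <-] := fA_surj a; apply/eqP; rewrite -subr_eq0; apply: contraT => ne.
case: none; exists (h1 \- h2), n; split=> // j lt_jk /=.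
by rewrite E ?subrr // mem_iota.
Qed.

End LinearMaps.

Section TriangularFamily.
Variables (R : comNzRingType) (A B : lmodType R).
Variables (g : nat -> {linear A -> B}) (bound : A -> nat) (e : nat -> A).
Hypothesis g_eventually0 : forall a n, (bound a <= n)%N -> g n a = 0.
Hypothesis g_triangular : forall i n, (i < n)%N -> g n (e i) = 0.
Hypothesis g_diag_neq0 : forall n, g n (e n) != 0.
Hypothesis B_torsion_free : torsion_free B.

Definition series (x : nat -> R) (a : A) : B := \sum_(n < bound a) x n *: g n a.

Lemma series_widen x a N :
  (bound a <= N)%N -> series x a = \sum_(n < N) x n *: g n a.
Proof.
move=> le_aN; rewrite (big_ord_vanishing_tail (F := fun n => x n *: g n a) le_aN) //.
by move=> n /g_eventually0 ->; rewrite scaler0.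
Qed.

Lemma series_is_linear x : linear (series x).
Proof.
move=> r a b; set N := maxn (bound (r *: a + b)) (maxn (bound a) (bound b)).
rewrite !(@series_widen _ _ N) ?leq_max ?leqnn ?orbT //.
rewrite scaler_sumr -big_split; apply: eq_bigr => n _ /=.
by rewrite linearP scalerDr !scalerA mulrC.
Qed.

Lemma series_combination r x y a :
  series (fun n => r * x n + y n) a = r *: series x a + series y a.
Proof.
rewrite /series scaler_sumr -big_split; apply: eq_bigr => n _ /=.
by rewrite scalerDl scalerA.
Qed.

Lemma series_diag x m : series x (e m) = \sum_(n < m.+1) x n *: g n (e m).
Proof.
rewrite (@series_widen _ _ (maxn (bound (e m)) m.+1)) ?leq_maxl //.
rewrite (big_ord_vanishing_tail (F := fun n => x n *: g n (e m)) (leq_maxr _ _)) //.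
by move=> n /g_triangular ->; rewrite scaler0.
Qed.

Lemma series_inj x y : (forall a, series x a = series y a) -> x =1 y.
Proof.
move=> E m; elim/ltn_ind: m => m IH.
have := E (e m); rewrite !series_diag !big_ord_recr /=.
rewrite (eq_bigr (fun n : 'I_m => y n *: g n (e m))) => [|n _]; last by rewrite IH.
move/addrI/eqP; rewrite -subr_eq0 -scalerBl => /eqP xy_tors.
apply/eqP; rewrite -subr_eq0; apply/negP => /negP xy_neq.
by move/eqP: (g_diag_neq0 m); rewrite (B_torsion_free xy_neq xy_tors).
Qed.

Definition series_map (x : nat -> R) : {linear A -> B} :=
  linear_of (series_is_linear x).

End TriangularFamily.

Section Triangularization.
Variables (R : comNzRingType) (A B : lmodType R).
Variables (fA : nat -> A) (idx : A -> nat) (h : nat -> {linear A -> B}) (m : nat -> nat).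
Hypothesis idxK : cancel idx fA.
Hypothesis h_vanish : forall k j, (j < k)%N -> h k (fA j) = 0.
Hypothesis h_neq0 : forall k, h k (fA (m k)) != 0.

(* Choosing [level n.+1] past the witness index [m (level n)] makes the
   subsequence triangular. *)
Fixpoint level n := if n is n'.+1 then (m (level n')).+1 else 0%N.

Definition tri n := h (level n).
Definition witness n := fA (m (level n)).

Lemma leq_witness k : (k <= m k)%N.
Proof. by rewrite leqNgt; apply: contraNN (h_neq0 k) => /h_vanish ->. Qed.

Lemma leq_level n : (n <= level n)%N.
Proof. by elim: n => //= n IH; rewrite ltnS (leq_trans IH) ?leq_witness. Qed.

Lemma witness_lt_level i n : (i < n)%N -> (m (level i) < level n)%N.
Proof.
elim: n => // n IH; rewrite ltnS leq_eqVlt => /predU1P [-> // | /IH lt_in] /=.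
by rewrite ltnS (leq_trans (ltnW lt_in)) ?leq_witness.
Qed.

Lemma tri_eventually0 a n : ((idx a).+1 <= n)%N -> tri n a = 0.
Proof. by move=> lt_an; rewrite -[a]idxK h_vanish // (leq_trans lt_an) ?leq_level. Qed.

Lemma tri_triangular i n : (i < n)%N -> tri n (witness i) = 0.
Proof. by move=> lt_in; rewrite /tri h_vanish ?witness_lt_level. Qed.

End Triangularization.

Unset Implicit Arguments.

Theorem lemma3p18 (R : comNzRingType) (S : pred R)
  (A B : lmodType R) :
  countable_type R ->
  mult_subset S -> cotorsion_free S ->
  torsion_free A -> countable_type A ->
  torsion_free B -> countable_type B ->
  ~ countable_type {linear A -> B} ->
  exists iota : (nat -> R) -> {linear A -> B},
    (forall (r : R) (x y : nat -> R) (a : A),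
        iota (fun n => r * x n + y n) a = r *: iota x a + iota y a) /\
    (forall x y : nat -> R, (forall a, iota x a = iota y a) -> x = y).
Proof.
move=> _ _ _ _ [fA fA_surj] B_tf B_cnt H_unc.
have [idx idxK] := choice (fun a n => fA n = a) fA_surj.
have [h hP] := choice _ (uncountable_hom_separates fA_surj B_cnt H_unc).
have [m hmP] := choice _ hP.
have h_vanish k : forall j, (j < k)%N -> h k (fA j) = 0 by case: (hmP k).
have h_neq0 k : h k (fA (m k)) != 0 by case: (hmP k).
have tri0 := tri_eventually0 idxK h_vanish h_neq0.
exists (series_map tri0); split; first exact: series_combination.
move=> x y E; apply: functional_extensionality.
have tri_tri := tri_triangular h_vanish h_neq0.
exact: (series_inj tri0 tri_tri (fun n => h_neq0 _) B_tf E).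
Qed.
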